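(* Under Total Store Order, in the limit $m\to\infty$, $\Pr[B_0]=2/3$, and for every integer $\gamma>0$, $$\Pr[B_\gamma]=\tfrac{6}{7}\cdot 4^{-\gamma}+R(\gamma)\cdot 2^{-\gamma}$$ for some number $R(\gamma)$ with $0\le R(\gamma)\le \tfrac{2}{21}$.
   Context: Fix $m\ge 1$. A random program is a sequence $x_1,\dots,x_{m+2}$ of memory operations, each with a type in $\{\mathrm{LD},\mathrm{ST}\}$: $x_1,\dots,x_m$ have i.i.d. types, each $\mathrm{ST}$ with probability $1/2$ and $\mathrm{LD}$ with probability $1/2$; $x_{m+1}$ (the critical load) has type $\mathrm{LD}$ and $x_{m+2}$ (the critical store) has type $\mathrm{ST}$. The initial order is $S_0=(x_1,\dots,x_{m+2})$. A memory model is specified by the set of ordered type pairs $(\tau_1,\tau_2)$ for which an instruction of type $\tau_2$ may be moved ahead of an immediately preceding instruction of type $\tau_1$: Sequential Consistency (SC) allows no pair; Total Store Order (TSO) allows only the pair $(\mathrm{ST},\mathrm{LD})$ (a load may move ahead of a preceding store); Weak Ordering (WO) allows all four pairs. The settling process runs rounds $r=1,\dots,m+2$. Before round $r$, the current order $S_{r-1}$ consists of $x_1,\dots,x_{r-1}$ in some order in positions $1,\dots,r-1$, followed by $x_r,\dots,x_{m+2}$ in positions $r,\dots,m+2$. In round $r$, instruction $x_r$ (starting at position $r$) repeatedly attempts to swap with the instruction immediately preceding it in the current order: the attempt fails automatically if the pair (type of the preceding instruction, type of $x_r$) is not allowed by the memory model, or if $x_r$ is the critical store and the preceding instruction is the critical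 load; otherwise the attempt succeeds independently with probability $1/2$. The round ends when an attempt fails or $x_r$ reaches position $1$; the resulting order is $S_r$. The final order is $S_{m+2}$. For $\gamma\ge 0$, $B_\gamma$ is the event that in $S_{m+2}$ exactly $\gamma$ instructions lie strictly between the critical load and the critical store. *)

From Stdlib Require Import Reals List Arith Bool.
Import ListNotations.
Open Scope R_scope.

Inductive ty : Type := LD | ST.

Definition ty_eqb (a b : ty) : bool :=
  match a, b with LD, LD | ST, ST => true | _, _ => false end.

(** An instruction x_i is represented by its index i (1-based) and its type. *)
Definition instr : Type := (nat * ty)%type.

(** A memory model: the set of ordered type pairs (tau1, tau2) such that an
    instruction of type tau2 may move ahead of an immediately preceding
    instruction of type tau1. *)
Definition model : Type := ty -> ty -> bool.

Definition SC : model := fun _ _ => false.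
Definition TSO : model := fun t1 t2 => ty_eqb t1 ST && ty_eqb t2 LD.
Definition WO : model := fun _ _ => true.

Definition dist (T : Type) : Type := list (R * T).

Definition dret {T} (x : T) : dist T := [(1, x)].
Definition dscale {T} (c : R) (d : dist T) : dist T :=
  map (fun p => (c * fst p, snd p)) d.
Definition dbind {T U} (d : dist T) (f : T -> dist U) : dist U :=
  flat_map (fun p => dscale (fst p) (f (snd p))) d.
Definition dprob {T} (d : dist T) (P : T -> bool) : R :=
  fold_right (fun p acc => (if P (snd p) then fst p else 0) + acc) 0 d.

Section Process.
Variable M : model.
Variable m : nat.

Definition crit_load : nat := S m.
Definition crit_store : nat := S (S m).

Definition blocked (p x : instr) : bool :=
  negb (M (snd p) (snd x)) ||
  (Nat.eqb (fst x) crit_store && Nat.eqb (fst p) crit_load).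

(** One round: [x] starts just after the current prefix.  [rpre] is the part
    of the order preceding x, reversed (head = immediate predecessor);
    [acc] are the instructions x has already passed (in order).  Returns the
    distribution of the resulting order of positions 1..r. *)
Fixpoint move (x : instr) (rpre acc : list instr) : dist (list instr) :=
  match rpre with
  | [] => dret (x :: acc)
  | p :: rest =>
      if blocked p x then dret (rev rpre ++ x :: acc)
      else dscale (/2) (dret (rev rpre ++ x :: acc))
           ++ dscale (/2) (move x rest (p :: acc))
  end.

(** Settling: rounds r = 1, ..., m+2, processing x_r in program order.
    [pre] is the current order of x_1..x_(r-1) (positions 1..r-1). *)
Fixpoint settle_from (pre : list instr) (prog : list instr)
  : dist (list instr) :=
  match prog with
  | [] => dret pre
  | x :: rest => dbind (move x (rev pre) []) (fun pre' => settle_from pre' rest)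
  end.

Definition settle (prog : list instr) : dist (list instr) := settle_from [] prog.

Fixpoint rand_types (i k : nat) : dist (list instr) :=
  match k with
  | O => dret []
  | S k' =>
      dbind (rand_types (S i) k') (fun rest =>
        dscale (/2) (dret ((i, ST) :: rest)) ++ dscale (/2) (dret ((i, LD) :: rest)))
  end.

Definition program : dist (list instr) :=
  dbind (rand_types 1 m) (fun l => dret (l ++ [(crit_load, LD); (crit_store, ST)])).

Fixpoint pos_of (k : nat) (l : list instr) : nat :=
  match l with
  | [] => O
  | x :: t => if Nat.eqb (fst x) k then O else S (pos_of k t)
  end.

(** Event B_gamma: exactly gamma instructions strictly between the critical
    load and the critical store in the final order. *)
Definition B (gamma : nat) (l : list instr) : bool :=
  let i := pos_of crit_load l in
  let j := pos_of crit_store l in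
  Nat.eqb (Nat.max i j - Nat.min i j) (S gamma).

Definition PrB (gamma : nat) : R := dprob (dbind program settle) (B gamma).

End Process.

(* Under TSO a store never moves and a load only moves past the stores immediately
   before it, each with probability 1/2; in particular the critical-pair clause never
   fires, so the process does not depend on m.  What matters is the number L of stores
   ending the current order: a store raises it by one, and a load passing k of them
   resets it to k.  Hence T(m, j) = Pr[L >= j] after m random instructions satisfies
   T(m+1, j+1) = T(m, j)/2 + 2^-(j+2) T(m, j+1).  The critical load passes exactly the
   stores that end up between it and the critical store, so
   Pr[B_g] = 2^-g T(m, g) - 2^-(g+1) T(m, g+1).  The limits t_j of T(., j) satisfy
   t_(j+1) = t_j / (2 - 2^-(j+1)), giving Pr[B_g] -> 2^-g t_g (3 - 2^-g) / (4 - 2^-g),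
   and the bounds 4/3 x <= t_g <= (2 - 4/3 x) x with x = 2^-g give the estimate. *)

From Pilot Require Import Defs.
From Stdlib Require Import Reals List Arith Lia Lra Psatz Bool Permutation.
Import ListNotations.
Open Scope R_scope.

Fixpoint dexp {T} (d : Defs.dist T) (g : T -> R) : R :=
  match d with [] => 0 | p :: d' => fst p * g (snd p) + dexp d' g end.

Lemma dprob_dexp {T} (d : Defs.dist T) P :
  dprob d P = dexp d (fun x => if P x then 1 else 0).
Proof.
  induction d as [|[a x] d IH]; simpl; [reflexivity|].
  rewrite IH; destruct (P x); ring.
Qed.

Lemma dexp_ret {T} (x : T) g : dexp (dret x) g = g x.
Proof. simpl; ring. Qed.

Lemma dexp_app {T} (d1 d2 : Defs.dist T) g : dexp (d1 ++ d2) g = dexp d1 g + dexp d2 g.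
Proof. induction d1 as [|p d IH]; simpl; [ring|]. rewrite IH; ring. Qed.

Lemma dexp_scale {T} c (d : Defs.dist T) g : dexp (dscale c d) g = c * dexp d g.
Proof. induction d as [|p d IH]; simpl; [ring|]. rewrite IH; ring. Qed.

Lemma dexp_bind {T U} (d : Defs.dist T) (f : T -> Defs.dist U) g :
  dexp (dbind d f) g = dexp d (fun x => dexp (f x) g).
Proof.
  induction d as [|p d IH]; simpl; [reflexivity|].
  unfold dbind in *; simpl. rewrite dexp_app, dexp_scale, IH. reflexivity.
Qed.

Lemma eq_dbind {T U} (d : Defs.dist T) (f g : T -> Defs.dist U) :
  (forall x, f x = g x) -> dbind d f = dbind d g.
Proof.
  intros H; induction d as [|p d IH]; [reflexivity|].
  unfold dbind in *; simpl; rewrite H, IH; reflexivity.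
Qed.

Lemma dexp_lin {T} (d : Defs.dist T) a b f h :
  dexp d (fun x => a * f x + b * h x) = a * dexp d f + b * dexp d h.
Proof. induction d as [|p d IH]; simpl; [ring|]. rewrite IH; ring. Qed.

Lemma eq_dexp_in {T} (d : Defs.dist T) g g' :
  (forall p, In p d -> g (snd p) = g' (snd p)) -> dexp d g = dexp d g'.
Proof.
  induction d as [|p d IH]; intros H; simpl; [reflexivity|].
  rewrite H, IH by auto with datatypes. reflexivity.
Qed.

Lemma eq_dexp {T} (d : Defs.dist T) g g' : (forall x, g x = g' x) -> dexp d g = dexp d g'.
Proof. intros H; apply eq_dexp_in; auto. Qed.

Lemma in_dscale {T} c (d : Defs.dist T) p :
  In p (dscale c d) -> exists r, In r d /\ snd p = snd r.
Proof.
  unfold dscale; intros H; apply in_map_iff in H.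
  destruct H as [r [<- Hr]]; eauto.
Qed.

Lemma in_dbind {T U} (d : Defs.dist T) (f : T -> Defs.dist U) p :
  In p (dbind d f) -> exists q r, In q d /\ In r (f (snd q)) /\ snd p = snd r.
Proof.
  unfold dbind; intros H; apply in_flat_map in H.
  destruct H as [q [Hq Hp]]; apply in_dscale in Hp.
  destruct Hp as [r [Hr Hpr]]; eauto.
Qed.

Fixpoint tso_move (x : instr) (rpre acc : list instr) : Defs.dist (list instr) :=
  match rpre with
  | [] => dret (x :: acc)
  | p :: rest =>
      if negb (TSO (snd p) (snd x)) then dret (rev rpre ++ x :: acc)
      else dscale (/2) (dret (rev rpre ++ x :: acc))
           ++ dscale (/2) (tso_move x rest (p :: acc))
  end.

Fixpoint tso_settle (pre prog : list instr) : Defs.dist (list instr) :=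
  match prog with
  | [] => dret pre
  | x :: rest => dbind (tso_move x (rev pre) []) (fun pre' => tso_settle pre' rest)
  end.

Lemma move_TSO m x rpre acc :
  snd x = ST \/ fst x <> crit_store m -> move TSO m x rpre acc = tso_move x rpre acc.
Proof.
  intros Hx; revert acc; induction rpre as [|p rest IH]; intros acc; simpl; [reflexivity|].
  replace (blocked TSO m p x) with (negb (TSO (snd p) (snd x))).
  { rewrite IH; reflexivity. }
  unfold blocked; destruct Hx as [-> | Hx]; [destruct (snd p); reflexivity|].
  apply Nat.eqb_neq in Hx; rewrite Hx; simpl; rewrite orb_false_r; reflexivity.
Qed.

Lemma settle_from_TSO m pre prog :
  Forall (fun x => snd x = ST \/ fst x <> crit_store m) prog ->
  settle_from TSO m pre prog = tso_settle pre prog.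
Proof.
  revert pre; induction prog as [|x rest IH]; intros pre HF; simpl; [reflexivity|].
  inversion HF; subst; rewrite move_TSO by assumption.
  apply eq_dbind; intros; apply IH; assumption.
Qed.

Lemma tso_move_perm x rpre acc p :
  In p (tso_move x rpre acc) -> Permutation (snd p) (rev rpre ++ x :: acc).
Proof.
  revert acc p; induction rpre as [|q rest IH]; intros acc p Hp; cbn [tso_move] in Hp.
  - destruct Hp as [<- | []]; reflexivity.
  - destruct (negb _); [destruct Hp as [<- | []]; reflexivity|].
    apply in_app_or in Hp; destruct Hp as [[<- | []] | Hp]; [reflexivity|].
    apply in_dscale in Hp; destruct Hp as [r [Hr ->]].
    rewrite (IH _ _ Hr); simpl; rewrite <- app_assoc.
    apply Permutation_app_head, perm_swap.
Qed.

Lemma tso_settle_perm pre prog p :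
  In p (tso_settle pre prog) -> Permutation (snd p) (pre ++ prog).
Proof.
  revert pre p; induction prog as [|x rest IH]; intros pre p Hp; simpl in Hp.
  - destruct Hp as [<- | []]; rewrite app_nil_r; reflexivity.
  - apply in_dbind in Hp; destruct Hp as [q [r [Hq [Hr ->]]]].
    rewrite (IH _ _ Hr), (tso_move_perm _ _ _ _ Hq), rev_involutive, <- app_assoc.
    reflexivity.
Qed.

Lemma dexp_tso_settle_app pre l1 l2 g :
  dexp (tso_settle pre (l1 ++ l2)) g =
  dexp (tso_settle pre l1) (fun pre' => dexp (tso_settle pre' l2) g).
Proof.
  revert pre; induction l1 as [|x l1 IH]; intros pre; simpl; [ring|].
  rewrite !dexp_bind; apply eq_dexp; intros; apply IH.
Qed.

Lemma rand_types_index i k p y :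
  In p (rand_types i k) -> In y (snd p) -> (i <= fst y < i + k)%nat.
Proof.
  revert i p; induction k as [|k IH]; intros i p Hp Hy; simpl in Hp.
  - destruct Hp as [<- | []]; destruct Hy.
  - apply in_dbind in Hp; destruct Hp as [q [r [Hq [Hr Hpr]]]]; rewrite Hpr in Hy.
    destruct Hr as [<- | [<- | []]]; destruct Hy as [<- | Hy];
      simpl; try lia; specialize (IH _ _ Hq Hy); lia.
Qed.

Lemma dexp_rand_types_S i k f :
  dexp (rand_types i (S k)) f =
  dexp (rand_types (S i) k) (fun l => /2 * f ((i, ST) :: l) + /2 * f ((i, LD) :: l)).
Proof. simpl rand_types; rewrite dexp_bind; apply eq_dexp; intros; simpl; ring. Qed.

Lemma dexp_rand_types_snoc k : forall i f,
  dexp (rand_types i (S k)) f =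
  dexp (rand_types i k)
    (fun l => /2 * f (l ++ [((i + k)%nat, ST)]) + /2 * f (l ++ [((i + k)%nat, LD)])).
Proof.
  induction k as [|k IH]; intros i f.
  - rewrite dexp_rand_types_S, Nat.add_0_r; reflexivity.
  - rewrite dexp_rand_types_S, IH, dexp_rand_types_S.
    apply eq_dexp; intros l; rewrite <- Nat.add_succ_comm.
    (* [ring] cannot be used directly: the atoms on the two sides differ in the
       implicit list type ([instr] versus [nat * ty]). *)
    assert (swap : forall a b c d : R,
      /2 * (/2 * a + /2 * b) + /2 * (/2 * c + /2 * d) =
      /2 * (/2 * a + /2 * c) + /2 * (/2 * b + /2 * d)) by (intros; ring).
    apply swap.
Qed.

Definition settled_exp (m : nat) (g : list instr -> R) : R :=
  dexp (rand_types 1 m) (fun l => dexp (tso_settle [] l) g).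

Lemma settled_exp_0 g : settled_exp 0 g = g [].
Proof. unfold settled_exp; cbn [rand_types]; rewrite dexp_ret; apply dexp_ret. Qed.

Lemma eq_settled_exp m g g' : (forall x, g x = g' x) -> settled_exp m g = settled_exp m g'.
Proof. intros H; unfold settled_exp; apply eq_dexp; intros; apply eq_dexp; auto. Qed.

Lemma settled_exp_lin m a b f h :
  settled_exp m (fun x => a * f x + b * h x) = a * settled_exp m f + b * settled_exp m h.
Proof. unfold settled_exp; rewrite <- dexp_lin; apply eq_dexp; intros; apply dexp_lin. Qed.

Lemma settled_exp_S m g :
  settled_exp (S m) g = settled_exp m (fun pre =>
    /2 * dexp (tso_move (S m, ST) (rev pre) []) g +
    /2 * dexp (tso_move (S m, LD) (rev pre) []) g).
Proof.
  unfold settled_exp; rewrite dexp_rand_types_snoc; apply eq_dexp; intros l.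
  rewrite !dexp_tso_settle_app, dexp_lin; f_equal; f_equal;
    apply eq_dexp; intros pre; simpl; rewrite dexp_bind; apply eq_dexp; intros; simpl; ring.
Qed.

Fixpoint leading_stores (l : list instr) : nat :=
  match l with
  | [] => O
  | p :: l' => match snd p with ST => S (leading_stores l') | LD => O end
  end.

Definition trailing_stores (pre : list instr) : nat := leading_stores (rev pre).

Lemma leading_stores_app l x r :
  Forall (fun y => snd y = ST) l -> snd x = LD -> leading_stores (l ++ x :: r) = length l.
Proof.
  intros HF Hx; induction HF as [|y l Hy HF IH]; simpl; [rewrite Hx | rewrite Hy, IH];
    reflexivity.
Qed.

Lemma firstn_leading_stores k l : (k <= leading_stores l)%nat ->
  Forall (fun y => snd y = ST) (firstn k l) /\ length (firstn k l) = k.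
Proof.
  revert l; induction k as [|k IH]; intros l Hk; [split; auto|].
  destruct l as [|p l]; simpl in Hk; [lia|].
  destruct (snd p) eqn:Hp; [lia|].
  destruct (IH l ltac:(lia)) as [H1 H2]; simpl; auto.
Qed.

(* [geom_exp G a n] is the expectation of [G (a + min K n)] for [K] geometric of parameter
   1/2: [min K n] is the number of stores a load passes when [n] stores precede it. *)
Fixpoint geom_exp (G : nat -> R) (a n : nat) : R :=
  match n with O => G a | S n' => /2 * G a + /2 * geom_exp G (S a) n' end.

Lemma geom_exp_shift G a n : geom_exp G (S a) n = geom_exp (fun k => G (S k)) a n.
Proof. revert a; induction n as [|n IH]; intros a; simpl; [|rewrite IH]; reflexivity. Qed.

Lemma eq_geom_exp G G' a n :
  (forall k, (a <= k <= a + n)%nat -> G k = G' k) -> geom_exp G a n = geom_exp G' a n.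
Proof.
  revert a; induction n as [|n IH]; intros a H; simpl.
  - apply H; lia.
  - rewrite H, (IH (S a)); [reflexivity | intros; apply H; lia | lia].
Qed.

Lemma geom_exp_sub G1 G2 a n :
  geom_exp (fun k => G1 k - G2 k) a n = geom_exp G1 a n - geom_exp G2 a n.
Proof. revert a; induction n as [|n IH]; intros a; simpl; [|rewrite IH; ring]; reflexivity. Qed.

Lemma geom_exp_const c a n : geom_exp (fun _ => c) a n = c.
Proof. revert a; induction n as [|n IH]; intros a; simpl; [|rewrite IH; field]; reflexivity. Qed.

Definition ind_le (j k : nat) : R := if Nat.leb j k then 1 else 0.

Lemma geom_exp_ind_le_from j n a :
  geom_exp (ind_le j) a n =
  if Nat.leb j a then 1 else if Nat.leb j (a + n) then (/2)^(j - a) else 0.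
Proof.
  revert a; induction n as [|n IH]; intros a; cbn [geom_exp]; unfold ind_le.
  - rewrite Nat.add_0_r; destruct (Nat.leb j a); reflexivity.
  - rewrite IH, <- Nat.add_succ_comm.
    destruct (Nat.leb_spec j a), (Nat.leb_spec j (S a)), (Nat.leb_spec j (S a + n));
      try lia; try lra.
    all: replace (j - a)%nat with (S (j - S a)) by lia; simpl.
    + replace (j - S a)%nat with O by lia; simpl; lra.
    + lra.
Qed.

Lemma geom_exp_ind_le j n : geom_exp (ind_le j) 0 n = (/2)^j * ind_le j n.
Proof.
  rewrite geom_exp_ind_le_from, Nat.sub_0_r; unfold ind_le; simpl.
  destruct j as [|j]; simpl; [ring|]; destruct n as [|n]; [|destruct (Nat.leb j n)]; ring.
Qed.

Lemma tso_move_ST x rpre acc : snd x = ST -> tso_move x rpre acc = dret (rev rpre ++ x :: acc).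
Proof.
  intros Hx; destruct rpre as [|p rest]; simpl; [reflexivity|].
  rewrite Hx; destruct (snd p); reflexivity.
Qed.

Lemma dexp_tso_move_LD x rpre acc g : snd x = LD ->
  dexp (tso_move x rpre acc) g =
  geom_exp (fun k => g (rev (skipn k rpre) ++ x :: rev (firstn k rpre) ++ acc))
    0 (leading_stores rpre).
Proof.
  intros Hx; revert acc; induction rpre as [|p rest IH]; intros acc;
    cbn [tso_move leading_stores geom_exp]; [apply dexp_ret|].
  rewrite Hx; destruct (snd p); simpl negb; cbv iota;
    [rewrite dexp_ret; reflexivity|].
  rewrite dexp_app, !dexp_scale, IH, dexp_ret; cbn [geom_exp]; rewrite geom_exp_shift.
  f_equal; f_equal; apply eq_geom_exp; intros k _; simpl.
  rewrite <- !app_assoc; reflexivity.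
Qed.

Lemma dexp_tso_move_ST_trailing i pre G :
  dexp (tso_move (i, ST) (rev pre) []) (fun p => G (trailing_stores p)) =
  G (S (trailing_stores pre)).
Proof.
  rewrite tso_move_ST, dexp_ret by reflexivity.
  unfold trailing_stores; rewrite rev_involutive, rev_app_distr; reflexivity.
Qed.

Lemma dexp_tso_move_LD_trailing i pre G :
  dexp (tso_move (i, LD) (rev pre) []) (fun p => G (trailing_stores p)) =
  geom_exp G 0 (trailing_stores pre).
Proof.
  rewrite dexp_tso_move_LD by reflexivity.
  apply eq_geom_exp; intros k Hk.
  destruct (firstn_leading_stores k (rev pre) ltac:(unfold trailing_stores in Hk; lia))
    as [Hst Hlen].
  unfold trailing_stores; rewrite app_nil_r, rev_app_distr; simpl.
  rewrite !rev_involutive, <- app_assoc; cbn [app].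
  rewrite leading_stores_app by auto; exact (f_equal G Hlen).
Qed.

Definition tail_prob (m j : nat) : R :=
  settled_exp m (fun pre => ind_le j (trailing_stores pre)).

Lemma tail_prob_0 m : tail_prob m 0 = 1.
Proof.
  induction m as [|m IH]; [unfold tail_prob; rewrite settled_exp_0; reflexivity|].
  unfold tail_prob in *; rewrite settled_exp_S, <- IH; apply eq_settled_exp; intros pre.
  rewrite (dexp_tso_move_ST_trailing _ _ (ind_le 0)),
    (dexp_tso_move_LD_trailing _ _ (ind_le 0)).
  unfold ind_le; cbn [Nat.leb]; rewrite geom_exp_const; field.
Qed.

Lemma tail_prob_S m j :
  tail_prob (S m) (S j) = /2 * tail_prob m j + (/2)^(S (S j)) * tail_prob m (S j).
Proof.
  unfold tail_prob; rewrite settled_exp_S, <- settled_exp_lin; apply eq_settled_exp.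
  intros pre; rewrite (dexp_tso_move_ST_trailing _ _ (ind_le (S j))),
    (dexp_tso_move_LD_trailing _ _ (ind_le (S j))), geom_exp_ind_le.
  unfold ind_le at 1 3; simpl; ring.
Qed.

Lemma pos_of_app k A r :
  (forall y, In y A -> fst y <> k) -> pos_of k (A ++ r) = (length A + pos_of k r)%nat.
Proof.
  induction A as [|a A IH]; intros H; simpl; [reflexivity|].
  destruct (Nat.eqb_spec (fst a) k) as [Ha|Ha].
  - exfalso; exact (H a (or_introl eq_refl) Ha).
  - f_equal; apply IH; auto with datatypes.
Qed.

Lemma B_gap m g A mid :
  (forall y, In y (A ++ mid) -> (fst y < crit_load m)%nat) ->
  B m g (A ++ (crit_load m, LD) :: mid ++ [(crit_store m, ST)]) = Nat.eqb (length mid) g.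
Proof.
  intros HAS; unfold B, crit_load, crit_store in *.
  assert (HA : forall k, (S m <= k)%nat -> forall y, In y A -> fst y <> k)
    by (intros k Hk y Hy; specialize (HAS y ltac:(auto with datatypes)); lia).
  assert (HS : forall k, (S m <= k)%nat -> forall y, In y mid -> fst y <> k)
    by (intros k Hk y Hy; specialize (HAS y ltac:(auto with datatypes)); lia).
  rewrite !pos_of_app by (apply HA; lia); cbn [pos_of fst].
  rewrite Nat.eqb_refl, (proj2 (Nat.eqb_neq (S m) (S (S m)))) by lia.
  rewrite pos_of_app by (apply HS; lia); cbn [pos_of fst]; rewrite Nat.eqb_refl.
  replace (Nat.max _ _ - Nat.min _ _)%nat with (S (length mid)) by lia; reflexivity.
Qed.

Lemma eqb_ind_le k g : (if Nat.eqb k g then 1 else 0) = ind_le g k - ind_le (S g) k.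
Proof.
  unfold ind_le; destruct (Nat.eqb_spec k g), (Nat.leb_spec g k), (Nat.leb_spec (S g) k);
    lia || lra.
Qed.

Lemma dexp_last_round m g (pre : list instr) :
  (forall y, In y pre -> (fst y < crit_load m)%nat) ->
  dexp (tso_settle pre [(crit_load m, LD); (crit_store m, ST)])
    (fun x => if B m g x then 1 else 0) =
  (/2)^g * ind_le g (trailing_stores pre) - (/2)^(S g) * ind_le (S g) (trailing_stores pre).
Proof.
  intros Hpre; cbn [tso_settle]; rewrite dexp_bind, dexp_tso_move_LD by reflexivity.
  rewrite <- !geom_exp_ind_le, <- geom_exp_sub; apply eq_geom_exp; intros k Hk.
  destruct (firstn_leading_stores k (rev pre) (proj2 Hk)) as [_ Hlen].
  rewrite dexp_bind, tso_move_ST, !dexp_ret, rev_involutive, !app_nil_r, <- app_assoc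
    by reflexivity; cbn [app].
  rewrite B_gap, length_rev; [rewrite <- Hlen at 2 3; apply eqb_ind_le|].
  intros y; rewrite <- rev_app_distr, firstn_skipn, rev_involutive; apply Hpre.
Qed.

Lemma PrB_TSO_tail_prob m g :
  PrB TSO m g = (/2)^g * tail_prob m g - (/2)^(S g) * tail_prob m (S g).
Proof.
  unfold Rminus; rewrite Ropp_mult_distr_l; unfold tail_prob; rewrite <- settled_exp_lin.
  unfold PrB, program, settle, settled_exp; rewrite dprob_dexp, !dexp_bind.
  apply eq_dexp_in; intros [a l] Hl; cbn [snd] in *; rewrite dexp_ret.
  pose proof (fun y => rand_types_index _ _ _ y Hl) as Hidx; cbn [snd] in Hidx.
  rewrite settle_from_TSO.
  2: { apply Forall_forall; intros y Hy; apply in_app_or in Hy.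
       destruct Hy as [Hy | [<- | [<- | []]]]; [|auto..].
       right; specialize (Hidx y Hy); unfold crit_store; lia. }
  rewrite dexp_tso_settle_app; apply eq_dexp_in; intros [b pre] Hpre.
  rewrite dexp_last_round; [ring|].
  intros y Hy; apply (Permutation_in _ (tso_settle_perm _ _ _ Hpre)) in Hy.
  specialize (Hidx y Hy); unfold crit_load; lia.
Qed.

Lemma affine_rec_dev_bound (y : nat -> R) a c N :
  0 <= a -> 0 <= c ->
  (forall n, (N <= n)%nat -> Rabs (y (S n)) <= a * Rabs (y n) + (1 - a) * c) ->
  forall k, Rabs (y (N + k)%nat) <= a ^ k * Rabs (y N) + c.
Proof.
  intros Ha Hc Hy; induction k as [|k IH].
  - rewrite Nat.add_0_r; simpl; lra.
  - rewrite Nat.add_succ_r; simpl pow.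
    specialize (Hy (N + k)%nat ltac:(lia)).
    assert (a * Rabs (y (N + k)%nat) <= a * (a ^ k * Rabs (y N) + c))
      by (apply Rmult_le_compat_l; lra).
    lra.
Qed.

Lemma Un_cv_affine_rec (x b : nat -> R) a l :
  0 <= a < 1 -> (forall n, x (S n) = a * x n + b n) -> Un_cv b l ->
  Un_cv x (l / (1 - a)).
Proof.
  intros Ha Hx Hb eps Heps.
  set (L := l / (1 - a)).
  destruct (Hb (eps / 2 * (1 - a))) as [N HN]; [apply Rmult_lt_0_compat; lra|].
  assert (Hdev : forall k, Rabs (x (N + k)%nat - L) <= a ^ k * Rabs (x N - L) + eps / 2).
  { apply (affine_rec_dev_bound (fun n => x n - L)); [lra | lra |].
    intros n Hn; rewrite Hx.
    replace (a * x n + b n - L) with (a * (x n - L) + (b n - l))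
      by (unfold L; field; lra).
    specialize (HN n Hn); unfold R_dist in HN.
    eapply Rle_trans; [apply Rabs_triang|].
    rewrite Rabs_mult, (Rabs_pos_eq a) by lra; lra. }
  destruct (pow_lt_1_zero a ltac:(rewrite Rabs_pos_eq; lra) (eps / 2 / (Rabs (x N - L) + 1)))
    as [K HK]; [apply Rdiv_lt_0_compat; [lra | pose proof (Rabs_pos (x N - L)); lra]|].
  exists (N + K)%nat; intros n Hn; unfold R_dist.
  replace n with (N + (n - N))%nat by lia.
  specialize (HK (n - N)%nat ltac:(lia)); specialize (Hdev (n - N)%nat).
  rewrite Rabs_pos_eq in HK by (apply pow_le; lra).
  apply Rlt_le_trans with (eps / 2 + eps / 2); [|lra].
  apply Rle_lt_trans with (1 := Hdev), Rplus_lt_compat_r.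
  pose proof (Rabs_pos (x N - L)).
  apply (Rmult_lt_compat_r (Rabs (x N - L) + 1)) in HK; [|lra].
  unfold Rdiv in HK; rewrite Rmult_assoc, Rinv_l in HK by lra.
  assert (0 <= a ^ (n - N)) by (apply pow_le; lra).
  nra.
Qed.

Lemma Un_cv_const c : Un_cv (fun _ => c) c.
Proof. intros eps Heps; exists O; intros; unfold R_dist; rewrite Rminus_diag, Rabs_R0; lra. Qed.

Fixpoint tail_lim (j : nat) : R :=
  match j with
  | O => 1
  | S j' => /2 * tail_lim j' / (1 - (/2)^(S (S j')))
  end.

Lemma pow_half_bounds j : 0 < (/2)^(S j) <= /2.
Proof.
  induction j as [|j [IH1 IH2]]; [simpl; lra|].
  change ((/2)^(S (S j))) with (/2 * (/2)^(S j)).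
  split; [apply Rmult_lt_0_compat|]; lra.
Qed.

Lemma tail_prob_cv j : Un_cv (fun m => tail_prob m j) (tail_lim j).
Proof.
  induction j as [|j IH]; cbn [tail_lim].
  - apply (Un_cv_ext (fun _ => 1)); [intros; rewrite tail_prob_0|apply Un_cv_const]; reflexivity.
  - apply Un_cv_affine_rec with (b := fun m => /2 * tail_prob m j).
    + pose proof (pow_half_bounds (S j)); lra.
    + intros n; rewrite tail_prob_S; ring.
    + apply (CV_mult (fun _ => /2)); [apply Un_cv_const | exact IH].
Qed.

Lemma PrB_TSO_cv g :
  Un_cv (fun m => PrB TSO m g) ((/2)^g * tail_lim g - (/2)^(S g) * tail_lim (S g)).
Proof.
  apply (Un_cv_ext (fun m => (/2)^g * tail_prob m g - (/2)^(S g) * tail_prob m (S g))).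
  { intros; symmetry; apply PrB_TSO_tail_prob. }
  apply CV_minus; apply (CV_mult (fun _ => _)); apply Un_cv_const || apply tail_prob_cv.
Qed.

Lemma remainder_bounds x t : 0 < x <= /2 -> 4/3 * x <= t <= (2 - 4/3 * x) * x ->
  0 <= t * (3 - x) / (4 - x) - 6/7 * x <= 2/21.
Proof.
  intros Hx Ht.
  replace (t * (3 - x) / (4 - x) - 6/7 * x) with ((t * (3 - x) - 6/7 * x * (4 - x)) / (4 - x))
    by (field; lra).
  split.
  - apply Rmult_le_pos; [nra | apply Rlt_le, Rinv_0_lt_compat; lra].
  - apply Rmult_le_reg_r with (4 - x); [lra|].
    unfold Rdiv; rewrite Rmult_assoc, Rinv_l, Rmult_1_r by lra.
    (* The goal reduces to 7x^3 - 27x^2 + 14x - 2 <= 0, whose maximum on (0, 1/2] lies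
       just below 0 near x = 0.29; the two products below certify it. *)
    assert (0 <= (x - 29/100)^2 * x) by (apply Rmult_le_pos; [apply pow2_ge_0 | lra]).
    assert (0 <= (x - 29/100)^2 * (/2 - x)) by (apply Rmult_le_pos; [apply pow2_ge_0 | lra]).
    assert (t * (3 - x) <= (2 - 4/3 * x) * x * (3 - x)) by nra.
    nra.
Qed.

Lemma tail_lim_bounds j :
  4/3 * (/2)^(S j) <= tail_lim (S j) <= (2 - 4/3 * (/2)^(S j)) * (/2)^(S j).
Proof.
  induction j as [|j IH]; [cbn; split; field_simplify; lra|].
  change (tail_lim (S (S j))) with (/2 * tail_lim (S j) / (1 - (/2)^(S (S (S j))))).
  pose proof (pow_half_bounds j) as Hx.
  replace ((/2)^(S (S (S j)))) with ((/2)^(S j) / 4) by (simpl; field).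
  replace ((/2)^(S (S j))) with ((/2)^(S j) / 2) in * by (simpl; field).
  set (x := (/2)^(S j)) in *; set (t := tail_lim (S j)) in *.
  replace (/2 * t / (1 - x / 4)) with (2 * t / (4 - x)) by (field; lra).
  assert (Hmul : 2 * t / (4 - x) * (4 - x) = 2 * t) by (field; lra).
  split; apply Rmult_le_reg_r with (4 - x); try lra; rewrite Hmul; nra.
Qed.

Lemma PrB_TSO_limit g :
  (/2)^g * tail_lim g - (/2)^(S g) * tail_lim (S g) =
  (/2)^g * (tail_lim g * (3 - (/2)^g) / (4 - (/2)^g)).
Proof.
  assert (Hx : (/2)^g <= 1) by (destruct g; [simpl; lra|]; pose proof (pow_half_bounds g); lra).
  cbn [tail_lim]; replace ((/2)^(S (S g))) with ((/2)^g / 4) by (simpl; field).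
  simpl pow at 2; field; lra.
Qed.

Theorem theorem1 :
  Un_cv (fun m : nat => PrB TSO m 0) (2 / 3) /\
  (forall gamma : nat, (0 < gamma)%nat ->
     exists Rg : R, 0 <= Rg <= 2 / 21 /\
       Un_cv (fun m : nat => PrB TSO m gamma)
             (6 / 7 * (/ 4) ^ gamma + Rg * (/ 2) ^ gamma)).
Proof.
  split.
  - replace (2 / 3) with ((/2)^0 * (tail_lim 0 * (3 - (/2)^0) / (4 - (/2)^0)))
      by (simpl; field).
    rewrite <- PrB_TSO_limit; apply PrB_TSO_cv.
  - intros [|j] Hj; [lia|].
    pose proof (PrB_TSO_cv (S j)) as Hcv; rewrite PrB_TSO_limit in Hcv.
    pose proof (pow_half_bounds j) as Hx; pose proof (tail_lim_bounds j) as Ht.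
    set (x := (/2)^(S j)) in *; set (t := tail_lim (S j)) in *.
    exists (t * (3 - x) / (4 - x) - 6/7 * x); split; [apply remainder_bounds; lra|].
    replace ((/4)^(S j)) with (x * x) by (unfold x; rewrite <- Rpow_mult_distr; f_equal; field).
    replace (6 / 7 * (x * x) + (t * (3 - x) / (4 - x) - 6 / 7 * x) * x)
      with (x * (t * (3 - x) / (4 - x))) by ring.
    exact Hcv.
Qed.
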